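(* Let $G$ be a prefix-independent game played on a finite graph, let $v_0\in V$, let $\epsilon\ge0$, and let $\lambda^*$ be the least $\epsilon$-fixed point of the negotiation function of $G$. Let $\theta$ be a play starting in $v_0$. If there exists an $\epsilon$-SPE $\bar\sigma$ in $G_{\|v_0}$ with $\langle\bar\sigma\rangle=\theta$, then $\theta$ is $\lambda^*$-consistent. If moreover $G$ has steady negotiation, then conversely, if $\theta$ is $\lambda^*$-consistent, there exists an $\epsilon$-SPE $\bar\sigma$ in $G_{\|v_0}$ with $\langle\bar\sigma\rangle=\theta$.
   Context: A game is a tuple $G=(\Pi,V,(V_i)_{i\in\Pi},E,\mu)$ where $\Pi$ is a finite set of players, $(V,E)$ is a directed graph in which every vertex has at least one outgoing edge, $(V_i)_{i\in\Pi}$ is a partition of $V$ ($V_i$ = vertices controlled by player $i$), and $\mu=(\mu_i)_{i\in\Pi}:V^\omega\to\mathbb{R}^\Pi$ is the payoff function. Plays are infinite paths, histories finite nonempty paths; $\rho_{\ge n}=\rho_n\rho_{n+1}\cdots$. A strategy for player $i$ from $v_0$ maps each history $hv$ starting at $v_0$ with $v\in V_i$ to a successor of $v$; $-i=\Pi\setminus\{i\}$; a complete profile $\bar\sigma$ from $v_0$ has a unique compatible play, its outcome $\langle\bar\sigma\rangle$; for a history $hv$, $\bar\sigma_{\|hv}$ is the profile from $v$ given by $\sigma_{j\|hv}(h')=\sigma_j(hh')$. $G$ is prefix-independent if $\mu(h\rho)=\mu(\rho)$ for every history $h$ and play $\rho$ with $h\rho$ a play. For $\epsilon\ge0$, a profile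 $\bar\sigma$ from $v_0$ is an $\epsilon$-SPE if for every history $hv$ from $v_0$, every player $i$ and every strategy $\sigma'_i$ from $v$, $\mu_i(\langle\bar\sigma_{-i\|hv},\sigma'_i\rangle)\le\mu_i(\langle\bar\sigma_{\|hv}\rangle)+\epsilon$ (a $0$-SPE is a subgame-perfect equilibrium). A requirement is a map $\lambda:V\to\overline{\mathbb{R}}=\mathbb{R}\cup\{\pm\infty\}$, ordered pointwise. A play $\rho$ is $\lambda$-consistent if for all $i$ and $n$ with $\rho_n\in V_i$, $\mu_i(\rho_{\ge n})\ge\lambda(\rho_n)$. For $v\in V_i$, a profile $\bar\sigma_{-i}$ from $v$ is $\lambda$-rational if there is a strategy $\sigma_i$ such that, with $\bar\sigma=(\bar\sigma_{-i},\sigma_i)$, for every history $hu$ from $v$ compatible with $\bar\sigma_{-i}$, the play $\langle\bar\sigma_{\|hu}\rangle$ is $\lambda$-consistent; $\lambda\mathsf{Rat}(v)$ is the set of such profiles. The negotiation function is $\mathsf{nego}(\lambda)(v)=\inf_{\bar\sigma_{-i}\in\lambda\mathsf{Rat}(v)}\sup_{\sigma_i}\mu_i(\langle\bar\sigma_{-i},\sigma_i\rangle)$ for $v\in V_i$, with $\inf\emptyset=+\infty$. $G$ has steady negotiation if for every requirement $\lambda$, every $i$ and every $v\in V_i$ with $\lambda\mathsf{Rat}(v)\ne\emptyset$, this infimum is attained. A requirement $\lambda$ is an $\epsilon$-fixed point of $\mathsf{nego}$ if for every $v$, $\lambda(v)-\epsilon\le\mathsf{nego}(\lambda)(v)\le\lambda(v)+\epsilon$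 (with $\pm\infty\pm\epsilon=\pm\infty$); a least one exists for every game. *)

From HB Require Import structures.
From mathcomp Require Import all_boot all_order all_algebra.
From mathcomp Require Import all_classical all_reals.
From mathcomp Require Import ereal.
Set Implicit Arguments. Unset Strict Implicit. Unset Printing Implicit Defensive.
Import Order.TTheory GRing.Theory Num.Theory.

Local Open Scope classical_set_scope.

(* A game on a finite graph: players Pl (finite), vertices V (finite),
   edge relation E (every vertex has a successor), owner v = the player i
   with v \in V_i (this encodes the partition), payoff mu : V^omega -> R^Pl. *)
Record game (R : realType) := Game {
  players : finType;
  vert : finType;
  edge : rel vert;
  own : vert -> players;
  payoff : (nat -> vert) -> players -> R;
  edge_total : forall v, exists w, edge v w }.

Section Games.
Variables (R : realType) (G : game R).
Local Notation Pl := (players G).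
Local Notation V := (vert G).
Local Notation E := (edge (g:=G)).
Local Notation owner := (own (g:=G)).
Local Notation mu := (payoff (g:=G)).

Definition isPlay (rho : nat -> V) : Prop := forall n, E (rho n) (rho n.+1).

Definition suffix (n : nat) (rho : nat -> V) : nat -> V := fun k => rho (n + k).

Definition prepend (h : seq V) (rho : nat -> V) : nat -> V :=
  fun k => if (k < size h)%N then nth (rho 0) h k else rho (k - size h).

Definition isHistoryFrom (v : V) (q : seq V) : Prop :=
  exists p, q = v :: p /\ path E v p.

Definition isHistory (q : seq V) : Prop := exists v, isHistoryFrom v q.

Definition prefix_independent : Prop :=
  forall (h : seq V) (rho : nat -> V), isHistory h -> isPlay rho ->
    isPlay (prepend h rho) -> mu (prepend h rho) = mu rho.

Definition strategy := seq V -> V.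

Definition isStrategy (i : Pl) (v : V) (s : strategy) : Prop :=
  forall p, path E v p -> owner (last v p) = i -> E (last v p) (s (v :: p)).

Definition profile := Pl -> strategy.

Definition isProfile (v : V) (sg : profile) : Prop :=
  forall j, isStrategy j v (sg j).

Definition deviate (sg : profile) (i : Pl) (s : strategy) : profile :=
  fun j => if j == i then s else sg j.

Fixpoint hist_of (sg : profile) (v : V) (n : nat) : seq V :=
  match n with
  | 0 => [:: v]
  | n.+1 => let h := hist_of sg v n in
            rcons h (sg (owner (last v h)) h)
  end.

Definition outcome (sg : profile) (v : V) : nat -> V :=
  fun n => last v (hist_of sg v n).

Definition hpre (q : seq V) : seq V :=
  match q with [::] => [::] | x :: s => belast x s end.

(* sg_{|| h u} : sigma_{j||hu}(h') = sigma_j(h h') *)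
Definition restrict (sg : profile) (q : seq V) : profile :=
  fun j h' => sg j (hpre q ++ h').

Definition eps_SPE (eps : R) (v0 : V) (sg : profile) : Prop :=
  isProfile v0 sg /\
  forall (q : seq V), isHistoryFrom v0 q ->
    forall (i : Pl) (s : strategy), isStrategy i (last v0 q) s ->
      (mu (outcome (deviate (restrict sg q) i s) (last v0 q)) i
      <= mu (outcome (restrict sg q) (last v0 q)) i + eps)%R.

Definition requirement := V -> \bar R.

Definition consistent (lam : requirement) (rho : nat -> V) : Prop :=
  forall (i : Pl) (n : nat), owner (rho n) = i ->
    (lam (rho n) <= (mu (suffix n rho) i)%:E)%E.

Definition compatible (i : Pl) (sg : profile) (v : V) (q : seq V) : Prop :=
  isHistoryFrom v q /\
  forall k, (k.+1 < size q)%N -> owner (nth v q k) != i ->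
    nth v q k.+1 = sg (owner (nth v q k)) (take k.+1 q).

(* partial profiles sg_{-i} from v (the i-component is irrelevant) *)
Definition isPartialProfile (i : Pl) (v : V) (sg : profile) : Prop :=
  forall j, j != i -> isStrategy j v (sg j).

Definition lamRat (lam : requirement) (v : V) : set profile :=
  [set sg | isPartialProfile (owner v) v sg /\
     exists s, isStrategy (owner v) v s /\
       forall q, compatible (owner v) sg v q ->
         consistent lam
           (outcome (restrict (deviate sg (owner v) s) q) (last v q))].

Definition best_resp_value (v : V) (sg : profile) : \bar R :=
  ereal_sup [set (mu (outcome (deviate sg (owner v) s) v) (owner v))%:E
            | s in isStrategy (owner v) v].

Definition nego (lam : requirement) : requirement :=
  fun v => ereal_inf [set best_resp_value v sg | sg in lamRat lam v].

Definition steady_negotiation : Prop :=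
  forall (lam : requirement) (v : V), lamRat lam v !=set0 ->
    exists2 sg, lamRat lam v sg & best_resp_value v sg = nego lam v.

Definition eps_fixed_point (eps : R) (lam : requirement) : Prop :=
  forall v, (lam v - eps%:E <= nego lam v)%E /\ (nego lam v <= lam v + eps%:E)%E.

Definition least_eps_fixed_point (eps : R) (lam : requirement) : Prop :=
  eps_fixed_point eps lam /\
  forall lam', eps_fixed_point eps lam' -> forall v, (lam v <= lam' v)%E.

End Games.

From Pilot Require Import Defs.
From HB Require Import structures.
From mathcomp Require Import all_boot all_order all_algebra.
From mathcomp Require Import all_classical all_reals.
From mathcomp Require Import ereal.
From mathcomp Require Import zify.
Import Order.TTheory GRing.Theory Num.Theory.
Set Implicit Arguments. Unset Strict Implicit. Unset Printing Implicit Defensive.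

(* An eps-SPE outcome is consistent with the requirement "infimum of the owner's payoff over
   the eps-SPEs from v"; as subgames of eps-SPEs are eps-SPEs, this requirement is an
   eps-fixed point of nego, hence it dominates the least one.
   Conversely, for a lam-consistent theta, let everybody follow theta until some player i
   leaves the prescribed play at a vertex u; the others then switch to a lam-rational profile
   from u realising nego lam u (steady negotiation; lam u < +oo because the play followed so
   far is lam-consistent).  Lam-rationality keeps every continuation lam-consistent, so the
   continuation i rejected gave it at least lam u, while it now gets at most
   nego lam u <= lam u + eps.  A punishment is restarted only at vertices of strictly smaller
   requirement, hence finitely often, and prefix independence lets payoffs be compared along
   suffixes. *)

Local Notation suffix := Defs.suffix.
Local Notation restrict := Defs.restrict.

Section Sequences.
Variable T : Type.
Implicit Types (P Q : nat -> T).

Lemma mkseqSl P n : mkseq P n.+1 = P 0 :: mkseq (fun j => P j.+1) n.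
Proof. by rewrite /mkseq /= -[1]/(1 + 0) iotaDl -map_comp. Qed.

Lemma last_mkseq d P n : last d (mkseq P n.+1) = P n.
Proof. by rewrite mkseqS last_rcons. Qed.

Lemma last_mkseqSl P n : last (P 0) (mkseq (fun j => P j.+1) n) = P n.
Proof. by case: n => [|n] //; rewrite (last_mkseq _ (fun j => P j.+1)). Qed.

Lemma take_mkseq P n m : n <= m -> take n (mkseq P m) = mkseq P n.
Proof. by move=> le_nm; rewrite /mkseq -map_take take_iota (minn_idPl _). Qed.

Lemma drop_mkseq P k n : drop k (mkseq P (k + n)) = mkseq (fun j => P (k + j)) n.
Proof. by rewrite /mkseq -map_drop drop_iota addKn add0n -[k in iota k _]addn0 iotaDl -map_comp. Qed.

Lemma eq_in_mkseq P Q n : {in gtn n, P =1 Q} -> mkseq P n = mkseq Q n.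
Proof. by move=> eqPQ; apply/eq_in_map => j; rewrite mem_iota add0n => /andP[_ /eqPQ]. Qed.

Lemma last_drop x k (s : seq T) : k < size s -> last x (drop k s) = last x s.
Proof. by move=> lt_k; rewrite -[in RHS](cat_take_drop k s) last_cat (drop_nth x). Qed.

End Sequences.

Section PlayGeneration.
Variable T : Type.
Implicit Types (f : seq T -> T) (H : seq T) (P : nat -> T).

Fixpoint grow f H n : seq T :=
  if n is n.+1 then rcons (grow f H n) (f (grow f H n)) else H.

Definition play_of f H (j : nat) : T := nth (f [::]) (grow f H j) j.

Lemma size_grow f H n : size (grow f H n) = size H + n.
Proof. by elim: n => [|n IH] /=; rewrite ?addn0 // size_rcons IH addnS. Qed.

Lemma grow_cons f x s n : grow f (x :: s) n = x :: behead (grow f (x :: s) n).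
Proof. by elim: n => [|n IH] //=; rewrite [in rcons _ _]IH. Qed.

Lemma grow_shift f g pre y n : (forall h, f (pre ++ y :: h) = g (y :: h)) ->
  pre ++ grow g [:: y] n = grow f (rcons pre y) n.
Proof.
move=> fg; elim: n => [|n IH] /=; first by rewrite cats1.
by rewrite -rcons_cat IH -IH grow_cons fg -grow_cons.
Qed.

Lemma nth_grow f H d m n j : j < size H + m -> m <= n ->
  nth d (grow f H n) j = nth d (grow f H m) j.
Proof.
move=> lt_j; elim: n => [|n IH]; first by rewrite leqn0 => /eqP ->.
rewrite leq_eqVlt => /orP[/eqP -> //|lt_mn].
by rewrite /= nth_rcons size_grow (leq_trans lt_j) ?leq_add2l // IH.
Qed.

Lemma grow_mkseq f x s n :
  grow f (x :: s) n = mkseq (play_of f (x :: s)) ((size s).+1 + n).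
Proof.
apply: (eq_from_nth (x0 := f [::])); first by rewrite size_grow size_mkseq.
move=> j; rewrite size_grow => lt_j; rewrite nth_mkseq // /play_of.
have [le_jn|lt_nj] := leqP j n.
  by rewrite (@nth_grow f _ _ j n j) // -{1}(add0n j) ltn_add2r.
by rewrite (@nth_grow f _ _ n j j) // ltnW.
Qed.

Lemma play_of_prefix f H d j : j < size H -> play_of f H j = nth d H j.
Proof. by move=> lt_j; rewrite /play_of (@nth_grow f H _ 0 j j) ?addn0 // (set_nth_default d). Qed.

Lemma play_of_next f x s j : size s <= j ->
  play_of f (x :: s) j.+1 = f (mkseq (play_of f (x :: s)) j.+1).
Proof.
move=> le_sj; set n := j - size s.
have size_n : (size s).+1 + n = j.+1 by rewrite addSn subnKC.
have := grow_mkseq f x s n.+1; rewrite /= grow_mkseq addnS size_n.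
by move/(congr1 (last (f [::]))); rewrite last_rcons last_mkseq => <-.
Qed.

Lemma play_of_unique f x s P d :
  (forall j, j <= size s -> P j = nth d (x :: s) j) ->
  (forall j, size s <= j -> P j.+1 = f (mkseq P j.+1)) ->
  P =1 play_of f (x :: s).
Proof.
move=> Ppre Pnext j; elim/ltn_ind: j => j IH.
have [le_js|lt_sj] := leqP j (size s); first by rewrite Ppre // (play_of_prefix _ d).
case: j IH lt_sj => [//|j] IH lt_sj.
rewrite Pnext // play_of_next //; congr f.
by apply: eq_in_mkseq => k lt_kj; apply: IH.
Qed.

Lemma mkseq_play_of f x s : mkseq (play_of f (x :: s)) (size s).+1 = x :: s.
Proof. by have := grow_mkseq f x s 0; rewrite addn0. Qed.

Lemma play_of_grow f x s n : play_of f (grow f (x :: s) n) =1 play_of f (x :: s).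
Proof.
have size_h := size_grow f (x :: s) n; rewrite grow_cons /= in size_h *.
move=> j; symmetry; apply: (play_of_unique (d := x)) => [k le_k|k le_k].
  by rewrite -grow_cons grow_mkseq nth_mkseq //; lia.
by rewrite play_of_next //; lia.
Qed.

Lemma play_of_shift f g x s k y r : drop k (x :: s) = y :: r ->
  (forall j, size r <= j -> f (mkseq (play_of f (x :: s)) (k + j).+1) =
                             g (mkseq (fun i => play_of f (x :: s) (k + i)) j.+1)) ->
  forall j, play_of f (x :: s) (k + j) = play_of g (y :: r) j.
Proof.
move=> drop_k fg; have := congr1 size drop_k; rewrite size_drop /= => size_r.
apply: (play_of_unique (d := y)) => [j le_jr|j le_rj].
  rewrite (play_of_prefix _ x) /=; last by lia.
  by rewrite -nth_drop drop_k (set_nth_default y) //= ltnS.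
by rewrite addnS play_of_next ?fg //; lia.
Qed.

End PlayGeneration.

Section Plays.
Variables (R : realType) (G : game R).
Local Notation V := (vert G).
Local Notation E := (edge (g:=G)).
Local Notation owner := (own (g:=G)).
Local Notation mu := (payoff (g:=G)).
Implicit Types (P : nat -> V) (sg : profile G) (x y v : V) (p q s t : seq V).

Definition profile_move sg (v : V) (h : seq V) : V := sg (owner (last v h)) h.

Lemma hist_of_grow sg v n : hist_of sg v n = grow (profile_move sg v) [:: v] n.
Proof. by elim: n => [|n IH] //=; rewrite IH. Qed.

Lemma outcome_play_of sg v : outcome sg v = play_of (profile_move sg v) [:: v].
Proof. by apply: funext => n; rewrite /outcome hist_of_grow grow_mkseq add1n last_mkseq. Qed.

Lemma path_mkseq P n : (forall k, k < n -> E (P k) (P k.+1)) ->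
  path E (P 0) (mkseq (fun k => P k.+1) n).
Proof.
elim: n => [|n IH] // edges; rewrite mkseqS rcons_path IH => [|k lt_kn]; last exact/edges/ltnW.
by rewrite last_mkseqSl edges.
Qed.

Lemma play_path P n : isPlay P -> path E (P 0) (mkseq (fun j => P j.+1) n).
Proof. by move=> playP; apply: path_mkseq. Qed.

Lemma play_history P n : isPlay P -> isHistoryFrom (P 0) (mkseq P n.+1).
Proof. by move=> playP; exists (mkseq (fun j => P j.+1) n); rewrite mkseqSl play_path. Qed.

Lemma suffix_play P n : isPlay P -> isPlay (suffix n P).
Proof. by move=> playP k; rewrite /suffix addnS. Qed.

Lemma suffix_suffix P n m : suffix m (suffix n P) = suffix (n + m) P.
Proof. by apply: funext => k; rewrite /suffix addnA. Qed.

Lemma suffix0 P : suffix 0 P = P.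
Proof. by apply: funext => k; rewrite /suffix add0n. Qed.

Lemma compatible_rcons i sg a q u : compatible i sg a q -> E (last a q) u ->
  (owner (last a q) != i -> u = sg (owner (last a q)) q) -> compatible i sg a (rcons q u).
Proof.
move=> [[p [q_p path_p]] compat] edge_u follow; split.
  by exists (rcons p u); rewrite q_p rcons_path path_p; rewrite q_p in edge_u.
move=> k; rewrite size_rcons ltnS => le_kq; rewrite !nth_rcons -cats1 take_cat.
have [lt_kq|le_qk] := ltnP k.+1 (size q); first by rewrite (ltnW lt_kq); apply: compat.
have last_k : k.+1 = size q by apply/eqP; rewrite eqn_leq le_kq le_qk.
have nth_k : nth a q k = last a q by rewrite -nth_last -last_k.
by rewrite -last_k ltnSn eqxx subnn take0 cats0 nth_k.
Qed.

Definition any_successor (x : V) : V := xchoose (edge_total x).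

Lemma edge_any_successor x : E x (any_successor x).
Proof. exact: xchooseP. Qed.

Definition follow_play P : strategy G := fun h =>
  if h == mkseq P (size h) then P (size h) else any_successor (last (P 0) h).

Lemma follow_play_isStrategy i P : isPlay P -> isStrategy i (P 0) (follow_play P).
Proof.
move=> play_P p _ _; rewrite /follow_play /=; case: eqP => [hist|_]; last exact: edge_any_successor.
by rewrite -[last _ p]/(last (P 0) (P 0 :: p)) hist last_mkseq.
Qed.

Lemma outcome_follow_play sg i P :
  (forall j, owner (P j) != i -> P j.+1 = sg (owner (P j)) (mkseq P j.+1)) ->
  outcome (deviate sg i (follow_play P)) (P 0) = P.
Proof.
move=> follow; apply: funext => n; rewrite /outcome.
suff -> : hist_of (deviate sg i (follow_play P)) (P 0) n = mkseq P n.+1 by rewrite last_mkseq.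
elim: n => [|n IH] //=; rewrite IH last_mkseq [mkseq P n.+2]mkseqS /deviate.
case: eqP => [_|/eqP own_n]; last by rewrite follow.
by rewrite /follow_play size_mkseq eqxx.
Qed.

Lemma compatible_mkseq i sg P b n : P 0 = b -> compatible i sg b (mkseq P n) ->
  forall j, j.+1 < n -> owner (P j) != i -> P j.+1 = sg (owner (P j)) (mkseq P j.+1).
Proof.
move=> <- [_ compat] j lt_jn own_j; have := compat j; rewrite size_mkseq => /(_ lt_jn).
by rewrite !nth_mkseq ?take_mkseq ?(ltnW lt_jn) // => /(_ own_j).
Qed.

Lemma best_resp_value_ge sg P b : isPlay P -> P 0 = b ->
  (forall j, owner (P j) != owner b -> P j.+1 = sg (owner (P j)) (mkseq P j.+1)) ->
  ((mu P (owner b))%:E <= best_resp_value b sg)%E.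
Proof.
move=> play_P <- follow; apply: ereal_sup_ubound; exists (follow_play P).
  exact: follow_play_isStrategy.
by rewrite outcome_follow_play.
Qed.

Lemma payoff_suffix P n : prefix_independent G -> isPlay P -> mu (suffix n P) = mu P.
Proof.
move=> PI playP; case: n => [|n]; first by rewrite suffix0.
have hist : isHistory (mkseq P n.+1) by exists (P 0); apply: play_history.
have glue : prepend (mkseq P n.+1) (suffix n.+1 P) = P.
  apply: funext => k; rewrite /prepend size_mkseq.
  by case: ltnP => lt_k; rewrite ?nth_mkseq // /suffix subnKC.
by have := PI _ _ hist (suffix_play n.+1 playP); rewrite glue => ->.
Qed.

Lemma hpre_cons x p t : hpre (x :: p) ++ last x p :: t = x :: p ++ t.
Proof. by rewrite /= -cat_rcons -lastI. Qed.

Lemma hpre_cat s y t : hpre (s ++ y :: t) = s ++ hpre (y :: t).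
Proof. by elim: s => [//|c s IH] /=; case: s IH => [//|d s] /= ->. Qed.

Lemma restrict_restrict sg q y t :
  restrict (restrict sg q) (y :: t) = restrict sg (hpre q ++ y :: t).
Proof. by apply: funext => j; apply: funext => h; rewrite /restrict hpre_cat catA. Qed.

Lemma restrict_cons sg x p j t : restrict sg (x :: p) j (last x p :: t) = sg j (x :: p ++ t).
Proof. by rewrite /restrict hpre_cons. Qed.

Lemma hist_of_history sg v n : isProfile v sg -> isHistoryFrom v (hist_of sg v n).
Proof.
move=> prof; elim: n => [|n [p [hist_p path_p]]] /=; first by exists [::].
rewrite hist_p; exists (rcons p (sg (owner (last v p)) (v :: p))); split => //.
by rewrite rcons_path path_p /=; apply: prof.
Qed.

Lemma outcome_restrict sg x p :
  outcome (restrict sg (x :: p)) (last x p) = suffix (size p) (play_of (profile_move sg x) (x :: p)).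
Proof.
apply: funext => n; rewrite /outcome /suffix hist_of_grow.
have shift : forall h, profile_move sg x (belast x p ++ last x p :: h) =
                       profile_move (restrict sg (x :: p)) (last x p) (last x p :: h).
  by move=> h; rewrite -[belast x p]/(hpre (x :: p)) hpre_cons /profile_move restrict_cons /= last_cat.
have := grow_shift n shift; rewrite -lastI (grow_mkseq (profile_move sg x)) addSn.
by move/(congr1 (last x)); rewrite last_mkseq last_cat grow_cons /= => <-; rewrite grow_cons.
Qed.

Lemma outcome_restrict_hist_of sg v n :
  outcome (restrict sg (hist_of sg v n)) (last v (hist_of sg v n)) = suffix n (outcome sg v).
Proof.
have [p hist_p] : exists p, hist_of sg v n = v :: p.
  by exists (behead (hist_of sg v n)); rewrite hist_of_grow -grow_cons.
have size_p : size p = n by have := size_grow (profile_move sg v) [:: v] n; rewrite -hist_of_grow hist_p => -[].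
rewrite hist_p -[last v (v :: p)]/(last v p) outcome_restrict size_p outcome_play_of -hist_p.
by rewrite hist_of_grow (funext (play_of_grow _ _ _ _)).
Qed.

End Plays.

Section SPEConsistency.
Variables (R : realType) (G : game R).
Local Notation V := (vert G).
Local Notation owner := (own (g:=G)).
Local Notation mu := (payoff (g:=G)).
Variable eps : R.

Lemma restrict_SPE v0 (sg : profile G) q : eps_SPE eps v0 sg -> isHistoryFrom v0 q ->
  eps_SPE eps (last v0 q) (restrict sg q).
Proof.
move=> [prof spe] [p0 [-> path_p0]]; split.
  move=> j p path_p own_p; rewrite -[last v0 p0 :: p]/(last v0 p0 :: p) restrict_cons.
  by have := prof j (p0 ++ p); rewrite cat_path path_p0 /= last_cat; apply.
move=> _ [p [-> path_p]] i s strat_s; rewrite restrict_restrict.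
have hist : isHistoryFrom v0 (hpre (v0 :: p0) ++ last v0 p0 :: p).
  by rewrite hpre_cons; exists (p0 ++ p); rewrite cat_path path_p0.
by have := spe _ hist i s; rewrite hpre_cons /= last_cat; apply.
Qed.

Definition spe_requirement : requirement G := fun v =>
  ereal_inf [set (mu (outcome tau v) (owner v))%:E | tau in eps_SPE eps v].

Lemma SPE_outcome_consistent (sg : profile G) v :
  eps_SPE eps v sg -> consistent spe_requirement (outcome sg v).
Proof.
move=> spe i n own_n; apply: ereal_inf_lbound.
exists (restrict sg (hist_of sg v n)); first exact/restrict_SPE/hist_of_history/(proj1 spe).
by rewrite outcome_restrict_hist_of own_n.
Qed.

Lemma spe_requirement_fixed_point : (0 <= eps)%R -> eps_fixed_point eps spe_requirement.
Proof.
move=> eps_ge0 v; split.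
  apply: le_ereal_inf_tmp => _ [sg [_ [s [strat_s cons]]] <-].
  have trivial_hist : compatible (owner v) sg v [:: v] by split => //; exists [::].
  have drop_eps : (spe_requirement v - eps%:E <= spe_requirement v)%E.
    by rewrite leeBlDr // leeDl // lee_fin.
  apply: le_trans drop_eps _.
  apply: le_trans (cons _ trivial_hist (owner v) 0 erefl) _.
  by apply: ereal_sup_ubound; exists s.
rewrite -leeBlDr //; apply: le_ereal_inf_tmp => _ [tau spe <-]; rewrite leeBlDr //.
have rat : lamRat spe_requirement v tau.
  split; first by move=> j _; apply: (proj1 spe).
  exists (tau (owner v)); split; first exact: (proj1 spe).
  have -> : deviate tau (owner v) (tau (owner v)) = tau.
    by apply: funext => j; rewrite /deviate; case: eqP => [->|].
  by move=> q [hist _]; apply/SPE_outcome_consistent/restrict_SPE.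
apply: le_trans (ereal_inf_lbound _) _; first by exists tau.
have root : isHistoryFrom v [:: v] by exists [::].
apply: ge_ereal_sup => _ [s strat_s <-]; rewrite -EFinD lee_fin.
exact: (proj2 spe _ root (owner v) s strat_s).
Qed.

Lemma SPE_outcome_consistent_least (lam : requirement G) v (sg : profile G) :
  (0 <= eps)%R -> least_eps_fixed_point eps lam -> eps_SPE eps v sg -> consistent lam (outcome sg v).
Proof.
move=> eps_ge0 [_ least] spe i n own_n.
apply: le_trans (SPE_outcome_consistent spe own_n).
exact: least (spe_requirement_fixed_point eps_ge0) _.
Qed.

End SPEConsistency.

Lemma stationary_of_decreasing_measure (T : Type) (f : nat -> T) (phi : T -> nat) M0 :
  (forall n, M0 <= n -> f n.+1 = f n \/ phi (f n.+1) < phi (f n)) ->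
  exists2 M, M0 <= M & forall n, M <= n -> f n = f M.
Proof.
move=> step; pose reached p := `[< exists2 n, M0 <= n & phi (f n) = p >].
have reachable : exists p, reached p by exists (phi (f M0)); apply/asboolP; exists M0.
case: (ex_minnP reachable) => p /asboolP[M le_M0M phiM] minp.
exists M => // n; elim: n => [|n IH]; first by rewrite leqn0 => /eqP ->.
rewrite leq_eqVlt => /orP[/eqP -> //|le_Mn].
have fnM := IH le_Mn; have le_M0n := leq_trans le_M0M le_Mn.
case: (step n le_M0n) => [-> //|]; rewrite fnM phiM => lt_p.
have := minp _ (asboolT (ex_intro2 _ _ n.+1 (leqW le_M0n) erefl)).
by rewrite leqNgt lt_p.
Qed.

Section Punishment.
Variables (R : realType) (G : game R) (eps : R) (lam : requirement G).
Local Notation V := (vert G).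
Local Notation E := (edge (g:=G)).
Local Notation owner := (own (g:=G)).
Local Notation mu := (payoff (g:=G)).
Hypothesis nego_le : forall v, (nego lam v <= lam v + eps%:E)%E.
Hypothesis steady : steady_negotiation G.

Definition punishing (a : V) (pr : profile G * strategy G) : Prop :=
  [/\ isPartialProfile (owner a) a pr.1, isStrategy (owner a) a pr.2,
   (forall q, compatible (owner a) pr.1 a q ->
      consistent lam (outcome (restrict (deviate pr.1 (owner a) pr.2) q) (last a q)))
   & best_resp_value a pr.1 = nego lam a].

(* Junk value when no punishing pair exists; it is only used at vertices with finite requirement. *)
Definition punisher (a : V) : profile G * strategy G :=
  if pselect (exists pr, punishing a pr) is left ex then projT1 (cid ex)
  else (fun _ _ => a, fun _ => a).

Lemma punisher_punishing a : lam a != +oo%E -> punishing a (punisher a).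
Proof.
move=> lam_fin; rewrite /punisher; case: pselect => [ex|no_pr]; first by case: cid.
have rat_ne : (lamRat lam a !=set0)%classic.
  apply/set0P/negP => /eqP rat0; move: lam_fin (nego_le a).
  by rewrite /nego rat0 image_set0 ereal_inf0 leye_eq; case: (lam a).
have [sg [part [s [strat_s cons]]] opt] := steady rat_ne.
by case: no_pr; exists (sg, s); split.
Qed.

Definition punishment (a : V) : profile G :=
  deviate (punisher a).1 (owner a) (punisher a).2.

Lemma punishment_isProfile a : punishing a (punisher a) -> isProfile a (punishment a).
Proof.
case=> part strat _ _ j; rewrite /punishment /deviate.
by case: eqP => [->|/eqP neq]; [exact: strat | exact: part].
Qed.

Variables (v0 : V) (theta : nat -> V).
Hypotheses (play_theta : isPlay theta) (theta0 : theta 0 = v0).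
Hypothesis cons_theta : consistent lam theta.

(* [None]: the history follows [theta]; [Some (a, k)]: the owner of [a] is being punished
   since it left the intended play at [a], the [k]-th vertex of the history. *)
Definition mode := option (V * nat).

Definition intended_move (m : mode) (h : seq V) : V :=
  if m is Some (a, k) then punishment a (owner (last v0 h)) (drop k h) else theta (size h).

Definition safe_move (m : mode) (h : seq V) : V :=
  if E (last v0 h) (intended_move m h) then intended_move m h else any_successor (last v0 h).

(* Keeping the punishment when the punished player deviates again from a vertex of at least
   the anchor's requirement makes that requirement decrease strictly at every restart. *)
Definition update (h : seq V) (m : mode) (u : V) : mode :=
  if u == safe_move m h then m else
  if m is Some (a, k) then
    if (owner a == owner (last v0 h)) && (lam a <= lam (last v0 h))%E then m
    else Some (last v0 h, (size h).-1)
  else Some (last v0 h, (size h).-1).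

Definition mode_step (acc : seq V * mode) (u : V) : seq V * mode :=
  (rcons acc.1 u, update acc.1 acc.2 u).

Definition mode_of (h : seq V) : mode :=
  if h is x :: t then (foldl mode_step ([:: x], None) t).2 else None.

Definition spe_move (h : seq V) : V := safe_move (mode_of h) h.

Definition spe_profile : profile G := fun=> spe_move.

Lemma mode_of_rcons x t u : mode_of (rcons (x :: t) u) = update (x :: t) (mode_of (x :: t)) u.
Proof.
rewrite /= foldl_rcons; congr (update _ _ u).
suff fst_foldl acc : (foldl mode_step acc t).1 = acc.1 ++ t by rewrite fst_foldl.
by elim: t acc => [|w t IH] acc /=; rewrite ?cats0 // IH cat_rcons.
Qed.

Lemma spe_move_edge h : E (last v0 h) (spe_move h).
Proof. by rewrite /spe_move /safe_move; case: ifP => // _; apply: edge_any_successor. Qed.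

Lemma spe_profile_isProfile : isProfile v0 spe_profile.
Proof. by move=> j p _ _; apply: (spe_move_edge (v0 :: p)). Qed.

Lemma mode_of_spe_move x t : mode_of (rcons (x :: t) (spe_move (x :: t))) = mode_of (x :: t).
Proof. by rewrite mode_of_rcons /update eqxx. Qed.

Lemma safe_move_theta n : safe_move None (mkseq theta n.+1) = theta n.+1.
Proof. by rewrite /safe_move /intended_move size_mkseq last_mkseq play_theta. Qed.

Lemma mode_of_theta n : mode_of (mkseq theta n.+1) = None.
Proof.
elim: n => [//|n IH]; rewrite mkseqS [mkseq theta n.+1]mkseqSl mode_of_rcons -mkseqSl.
by rewrite IH /update safe_move_theta eqxx.
Qed.

Lemma spe_move_theta n : spe_move (mkseq theta n.+1) = theta n.+1.
Proof. by rewrite /spe_move mode_of_theta safe_move_theta. Qed.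

Lemma mode_of_None t : mode_of (v0 :: t) = None -> v0 :: t = mkseq theta (size t).+1.
Proof.
elim/last_ind: t => [|t u IH]; first by rewrite /= -theta0.
rewrite -rcons_cons mode_of_rcons /update.
case mode_t: (mode_of (v0 :: t)) => [[a k]|]; first by case: ifP => //; case: ifP.
case: eqP => [-> _|//]; rewrite -mode_t -/(spe_move (v0 :: t)) (IH mode_t).
by rewrite spe_move_theta size_rcons -mkseqS.
Qed.

Lemma safe_move_punish a k h p : punishing a (punisher a) ->
  drop k h = a :: p -> path E a p -> safe_move (Some (a, k)) h = punishment a (owner (last a p)) (a :: p).
Proof.
move=> pun drop_k path_p.
have lt_k : k < size h by have := congr1 size drop_k; rewrite size_drop /=; lia.
have last_h : last v0 h = last a p by rewrite -[last a p]/(last v0 (a :: p)) -drop_k last_drop.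
rewrite /safe_move /intended_move last_h drop_k.
by rewrite (punishment_isProfile pun path_p erefl).
Qed.

Definition anchored (h : seq V) (a : V) (k : nat) : Prop :=
  [/\ k < size h, nth v0 h k = a, punishing a (punisher a)
    & compatible (owner a) (punisher a).1 a (drop k h)].

Definition mode_invariant (h : seq V) : Prop :=
  forall a k, mode_of h = Some (a, k) -> anchored h a k.

Definition spe_play (t : seq V) : nat -> V := play_of spe_move (v0 :: t).

Lemma spe_play_isPlay t : path E v0 t -> isPlay (spe_play t).
Proof.
move=> path_t j; have [lt_jt|le_tj] := ltnP j (size t).
  by rewrite /spe_play !(play_of_prefix _ v0) //=; [apply/(pathP v0)|rewrite ltnS ltnW].
by rewrite /spe_play play_of_next // -[X in E X _](last_mkseq v0) spe_move_edge.
Qed.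

Lemma mode_of_spe_play t n : size t <= n ->
  mode_of (mkseq (spe_play t) n.+1) = mode_of (v0 :: t).
Proof.
elim: n => [|n IH]; first by rewrite leqn0 => /eqP t0; rewrite -t0 mkseq_play_of.
rewrite leq_eqVlt => /orP[/eqP <-|lt_tn]; first by rewrite mkseq_play_of.
by rewrite mkseqS /spe_play play_of_next // [mkseq _ n.+1]mkseqSl mode_of_spe_move -mkseqSl IH.
Qed.

Lemma spe_play_consistent t : path E v0 t -> mode_invariant (v0 :: t) ->
  consistent lam (suffix (size t) (spe_play t)).
Proof.
move=> path_t inv; set P := spe_play t; have play_P : isPlay P := spe_play_isPlay path_t.
case mode_t: (mode_of (v0 :: t)) => [[a k]|]; last first.
  have -> : P = theta.
    apply: funext => j; symmetry; apply: (play_of_unique (d := v0)) => [i le_it|i _].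
      by rewrite [v0 :: t]mode_of_None // nth_mkseq.
    by rewrite spe_move_theta.
  by move=> i n own_n; rewrite suffix_suffix; apply: cons_theta.
have [lt_k nth_k pun compat] := inv a k mode_t; set r := drop k.+1 (v0 :: t).
have drop_k : drop k (v0 :: t) = a :: r by rewrite (drop_nth v0) // nth_k.
have size_t : size t = k + size r by have := congr1 size drop_k; rewrite size_drop /=; lia.
have P_k : P (k + 0) = a by rewrite addn0 /P /spe_play (play_of_prefix _ v0).
have shift : forall j, P (k + j) = play_of (profile_move (punishment a) a) (a :: r) j.
  apply: play_of_shift => // j le_rj; rewrite -/(spe_play t) -/P.
  have hist : drop k (mkseq P (k + j).+1) = a :: mkseq (fun i => P (k + i.+1)) j.
    by rewrite -addnS drop_mkseq mkseqSl P_k.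
  have path_hist : path E a (mkseq (fun i => P (k + i.+1)) j).
    by rewrite -P_k; apply: (play_path _ (suffix_play k play_P)).
  have mode_hist : mode_of (mkseq P (k + j).+1) = Some (a, k).
    by rewrite mode_of_spe_play ?size_t ?leq_add2l.
  by rewrite /spe_move mode_hist (safe_move_punish pun hist path_hist) mkseqSl P_k.
case: pun => _ _ /(_ _ compat) + _; rewrite drop_k /= outcome_restrict.
by congr consistent; apply: funext => m; rewrite /suffix size_t -addnA shift.
Qed.

Lemma anchored_rcons h a k u : anchored h a k -> E (last v0 h) u ->
  (owner (last v0 h) != owner a -> u = (punisher a).1 (owner (last v0 h)) (drop k h)) ->
  anchored (rcons h u) a k.
Proof.
move=> [lt_k nth_k pun compat] edge_u follow; split => //.
- by rewrite size_rcons ltnW.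
- by rewrite nth_rcons lt_k.
have last_dk : last a (drop k h) = last v0 h.
  by rewrite -(last_drop v0 lt_k) (drop_nth v0 lt_k) nth_k.
by rewrite drop_rcons ?(ltnW lt_k) //; apply: compatible_rcons; rewrite ?last_dk.
Qed.

Lemma anchored_deviation t u : path E v0 t -> mode_invariant (v0 :: t) -> E (last v0 t) u ->
  anchored (rcons (v0 :: t) u) (last v0 t) (size t).
Proof.
move=> path_t inv edge_u; have nth_t : nth v0 (v0 :: t) (size t) = last v0 t by rewrite nth_last.
split.
- by rewrite size_rcons ltnW.
- by rewrite nth_rcons ltnSn.
- apply: punisher_punishing.
  have := spe_play_consistent path_t inv (erefl (owner (suffix (size t) (spe_play t) 0))).
  by rewrite /suffix addn0 /spe_play (play_of_prefix _ v0) // nth_t; case: (lam _).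
have -> : drop (size t) (rcons (v0 :: t) u) = [:: last v0 t; u].
  by rewrite drop_rcons ?leqnSn // (drop_nth v0) // nth_t drop_oversize.
split; first by exists [:: u]; rewrite /= edge_u.
by move=> [|k] //= _; rewrite eqxx.
Qed.

Lemma mode_invariant_path t : path E v0 t -> mode_invariant (v0 :: t).
Proof.
elim/last_ind: t => [|t u IH] //; rewrite rcons_path => /andP[path_t edge_u] a k.
have inv := IH path_t; rewrite -rcons_cons mode_of_rcons /update.
case mode_t: (mode_of (v0 :: t)) => [[a' k']|]; last first.
  by case: ifP => // _ [<- <-]; apply: anchored_deviation.
have anch := inv a' k' mode_t.
case: eqP => [follow [<- <-]|_].
  apply: anchored_rcons => // own_neq; case: (anch) => lt_k _ pun [[p [drop_k path_p]] _].
  rewrite follow (safe_move_punish pun drop_k path_p) /punishment /deviate.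
  rewrite -[last a' p]/(last v0 (a' :: p)) -drop_k last_drop //.
  by rewrite (negbTE own_neq).
case: ifP => [/andP[/eqP own_eq _] [<- <-]|_ [<- <-]]; last exact: anchored_deviation.
by apply: anchored_rcons => //; rewrite own_eq eqxx.
Qed.

Definition mode_rank (m : mode) : nat :=
  if m is Some (a, _) then #|[pred c | (lam c < lam a)%E]| else 0.

Lemma mode_rank_lt c a k k' : (lam c < lam a)%E -> mode_rank (Some (c, k)) < mode_rank (Some (a, k')).
Proof.
move=> lt_ca; apply: proper_card; apply/properP; split.
  by apply/fintype.subsetP => x; rewrite !inE => /lt_trans; apply.
by exists c; rewrite !inE ?ltxx.
Qed.

Section Deviation.
Hypotheses (eps_ge0 : (0 <= eps)%R) (PI : prefix_independent G).
Variables (t : seq V) (i : players G) (s : strategy G).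
Hypotheses (path_t : path E v0 t) (strat_s : isStrategy i (last v0 t) s).

Definition dev_profile : profile G := deviate spe_profile i (fun h => s (drop (size t) h)).

Definition dev_play : nat -> V := play_of (profile_move dev_profile v0) (v0 :: t).

Local Notation P := (spe_play t).
Local Notation Q := dev_play.

Lemma dev_play_prefix j : j <= size t -> Q j = P j.
Proof. by move=> le_jt; rewrite /dev_play /spe_play !(play_of_prefix _ v0). Qed.

Lemma dev_play_next j : size t <= j -> Q j.+1 =
  if owner (Q j) == i then s (drop (size t) (mkseq Q j.+1)) else spe_move (mkseq Q j.+1).
Proof.
move=> le_tj; rewrite {1}/dev_play play_of_next // /profile_move last_mkseq.
by rewrite /dev_profile /deviate; case: eqP.
Qed.

Lemma dev_play_isPlay : isPlay Q.
Proof.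
move=> j; elim/ltn_ind: j => j IH; have [lt_jt|le_tj] := ltnP j (size t).
  by rewrite !dev_play_prefix // ?spe_play_isPlay // ltnW.
rewrite dev_play_next //; case: eqP => [own_j|_]; last first.
  by rewrite -[X in E X _](last_mkseq v0) spe_move_edge.
move: IH own_j; have [n ->] : exists n, j = size t + n by exists (j - size t); rewrite subnKC.
move=> IH own_j; pose Qt k := Q (size t + k.+1).
have Q_t : Q (size t + 0) = last v0 t.
  by rewrite addn0 dev_play_prefix // /spe_play (play_of_prefix _ v0) ?nth_last.
have hist : drop (size t) (mkseq Q (size t + n).+1) = last v0 t :: mkseq Qt n.
  by rewrite -addnS drop_mkseq mkseqSl Q_t.
have path_n : path E (last v0 t) (mkseq Qt n).
  rewrite -Q_t /Qt; apply: (@path_mkseq _ _ (fun k => Q (size t + k)) n) => k lt_kn.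
  by rewrite addnS; apply: IH; rewrite ltn_add2l.
have last_n : last (last v0 t) (mkseq Qt n) = Q (size t + n).
  by rewrite -Q_t /Qt (last_mkseqSl (fun k => Q (size t + k))).
by rewrite hist -[X in E X _]last_n; apply: strat_s; rewrite // last_n.
Qed.

Lemma deviation_owner j : size t <= j -> Q j.+1 != spe_move (mkseq Q j.+1) -> owner (Q j) = i.
Proof. by move=> le_tj; rewrite dev_play_next //; case: (owner (Q j) =P i); rewrite ?eqxx. Qed.

Lemma dev_play_agrees m :
  (forall n, size t <= n -> n < m -> Q n.+1 = spe_move (mkseq Q n.+1)) ->
  forall j, j <= m -> Q j = P j.
Proof.
move=> no_dev j; elim/ltn_ind: j => j IH le_jm.
have [le_jt|lt_tj] := leqP j (size t); first exact: dev_play_prefix.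
case: j IH le_jm lt_tj => [//|j] IH le_jm lt_tj.
rewrite no_dev // /spe_play play_of_next //; congr spe_move.
by apply: eq_in_mkseq => k lt_kj; apply: IH => //; apply: leq_trans le_jm; apply: ltnW.
Qed.

Definition dev_mode (n : nat) : mode := mode_of (mkseq Q n.+1).

Lemma dev_mode_next n : dev_mode n.+1 = update (mkseq Q n.+1) (dev_mode n) (Q n.+1).
Proof. by rewrite /dev_mode mkseqS [mkseq Q n.+1]mkseqSl mode_of_rcons -mkseqSl. Qed.

Lemma dev_mode_invariant n : mode_invariant (mkseq Q n.+1).
Proof.
have Q0 : Q 0 = v0 by rewrite dev_play_prefix // /spe_play (play_of_prefix _ v0).
have := play_path n dev_play_isPlay; rewrite mkseqSl Q0; exact: mode_invariant_path.
Qed.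

Lemma dev_mode_after_deviation m : size t <= m -> Q m.+1 != spe_move (mkseq Q m.+1) ->
  exists a k, [/\ dev_mode m.+1 = Some (a, k), owner a = i & (lam a <= lam (Q m))%E].
Proof.
move=> le_tm dev; have own_m := deviation_owner le_tm dev.
rewrite dev_mode_next /update -[safe_move _ _]/(spe_move (mkseq Q m.+1)) (negbTE dev).
rewrite last_mkseq size_mkseq; case: (dev_mode m) => [[a k]|]; last by exists (Q m), m.
case: ifP => [/andP[/eqP own_a le_a]|_]; last by exists (Q m), m.
by exists a, k; rewrite own_a own_m.
Qed.

Lemma dev_mode_step n a k : size t <= n -> dev_mode n = Some (a, k) -> owner a = i ->
  dev_mode n.+1 = Some (a, k) \/
  [/\ dev_mode n.+1 = Some (Q n, n), owner (Q n) = i & (lam (Q n) < lam a)%E].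
Proof.
move=> le_tn mode_n own_a; rewrite dev_mode_next mode_n /update.
case: eqP => [_|/eqP dev]; first by left.
have own_n : owner (Q n) = i by apply: deviation_owner; rewrite // /spe_move -/(dev_mode n) mode_n.
rewrite last_mkseq size_mkseq own_a own_n eqxx /=.
by case: leP => [_|lt_na]; [left | right].
Qed.

Lemma dev_mode_stationary m : size t <= m -> Q m.+1 != spe_move (mkseq Q m.+1) ->
  exists b kb M, [/\ forall n, M <= n -> dev_mode n = Some (b, kb), owner b = i
                   & (lam b <= lam (Q m))%E].
Proof.
move=> le_tm dev.
pose J n := exists a k, [/\ dev_mode n = Some (a, k), owner a = i & (lam a <= lam (Q m))%E].
have J_after n : m < n -> J n.
  elim: n => [//|n IH]; rewrite ltnS leq_eqVlt => /orP[/eqP <-|lt_mn].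
    exact: dev_mode_after_deviation.
  have [a [k [mode_n own_a le_a]]] := IH lt_mn.
  have [mode_n1|[mode_n1 own_n lt_na]] := dev_mode_step (leq_trans le_tm (ltnW lt_mn)) mode_n own_a.
  - by exists a, k.
  - by exists (Q n), n; split => //; apply: le_trans (ltW lt_na) le_a.
have [M le_mM stat] : exists2 M, m < M & forall n, M <= n -> dev_mode n = dev_mode M.
  apply: (stationary_of_decreasing_measure (phi := mode_rank)) => n lt_mn.
  have [a [k [mode_n own_a _]]] := J_after n lt_mn.
  have [->|[-> _ lt_na]] := dev_mode_step (leq_trans le_tm (ltnW lt_mn)) mode_n own_a.
    by left.
  by right; rewrite mode_n mode_rank_lt.
have [b [kb [mode_M own_b le_b]]] := J_after M le_mM.
by exists b, kb, M; split => // n le_Mn; rewrite stat.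
Qed.

Lemma punished_payoff b kb M : (forall n, M <= n -> dev_mode n = Some (b, kb)) -> owner b = i ->
  ((mu (suffix kb Q) i)%:E <= nego lam b)%E.
Proof.
move=> stat own_b.
have anch n : M <= n -> anchored (mkseq Q n.+1) b kb by move=> le_Mn; apply/dev_mode_invariant/stat.
have [lt_kb nth_kb [_ _ _ opt] _] := anch M (leqnn M); rewrite size_mkseq in lt_kb.
have Q_kb : suffix kb Q 0 = b by rewrite /suffix addn0 -nth_kb nth_mkseq.
rewrite -opt -own_b; apply: best_resp_value_ge (Q_kb) _; first exact: suffix_play dev_play_isPlay.
move=> j own_j; have le_M : M <= kb + (j.+1 + M) by lia.
have [_ _ _] := anch _ le_M; rewrite -addnS drop_mkseq => compat.
by apply: (compatible_mkseq Q_kb compat); rewrite // ltnS leq_addr.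
Qed.

Lemma no_profitable_deviation : (mu (suffix (size t) Q) i <= mu (suffix (size t) P) i + eps)%R.
Proof.
pose deviates m := (size t <= m) && (Q m.+1 != spe_move (mkseq Q m.+1)).
have [ex|no_dev] := pselect (exists m, deviates m); last first.
  have -> : Q = P.
    apply: funext => j; apply: (@dev_play_agrees j) => // n le_tn _.
    by apply/eqP; apply: contra_notT no_dev => dev; exists n; rewrite /deviates le_tn.
  by rewrite lerDl.
have [m /andP[le_tm dev] first] := ex_minnP ex.
have agree : forall j, j <= m -> Q j = P j.
  apply: dev_play_agrees => n le_tn lt_nm; apply/eqP; apply: contraTT lt_nm => dev_n.
  by rewrite -leqNgt first // /deviates le_tn.
have lam_Qm : (lam (Q m) <= (mu (suffix m P) i)%:E)%E.
  have := spe_play_consistent path_t (mode_invariant_path path_t) (i := i) (n := m - size t).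
  rewrite suffix_suffix -[suffix (size t) P _]/(P (size t + (m - size t))) subnKC // -agree //.
  by apply; apply: deviation_owner.
have [b [kb [M [stat own_b le_b]]]] := dev_mode_stationary le_tm dev.
rewrite -lee_fin EFinD (payoff_suffix _ PI dev_play_isPlay) -(payoff_suffix kb PI dev_play_isPlay).
rewrite (payoff_suffix _ PI (spe_play_isPlay path_t)) -(payoff_suffix m PI (spe_play_isPlay path_t)).
apply: le_trans (punished_payoff stat own_b) _; apply: le_trans (nego_le b) _.
exact/leeD2r/(le_trans le_b lam_Qm).
Qed.

Lemma outcome_deviate_restrict :
  outcome (deviate (restrict spe_profile (v0 :: t)) i s) (last v0 t) = suffix (size t) Q.
Proof.
have -> : deviate (restrict spe_profile (v0 :: t)) i s = restrict dev_profile (v0 :: t).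
  apply: funext => j; apply: funext => h; rewrite /restrict /dev_profile /deviate.
  by case: eqP => // _; rewrite drop_size_cat // size_belast.
exact: outcome_restrict.
Qed.

End Deviation.

Lemma spe_profile_SPE : (0 <= eps)%R -> prefix_independent G -> eps_SPE eps v0 spe_profile.
Proof.
move=> eps_ge0 PI; split; first exact: spe_profile_isProfile.
move=> _ [t [-> path_t]] i s strat_s /=; rewrite outcome_deviate_restrict outcome_restrict.
exact: no_profitable_deviation.
Qed.

Lemma outcome_spe_profile : outcome spe_profile v0 = theta.
Proof.
rewrite outcome_play_of; apply: funext => n; symmetry.
apply: (play_of_unique (d := v0)) => [[|//] _|k _]; first by rewrite theta0.
by rewrite /profile_move /spe_profile spe_move_theta.
Qed.

End Punishment.

Local Open Scope ring_scope.

Theorem mainTheorem4 (R : realType) (G : game R) (v0 : vert G) (eps : R)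
    (lamstar : requirement G) :
  prefix_independent G -> 0 <= eps -> least_eps_fixed_point eps lamstar ->
  (forall theta : nat -> vert G, isPlay theta -> theta 0%N = v0 ->
     (exists sg : profile G, eps_SPE eps v0 sg /\ outcome sg v0 = theta) ->
     consistent lamstar theta) /\
  (steady_negotiation G ->
   forall theta : nat -> vert G, isPlay theta -> theta 0%N = v0 ->
     consistent lamstar theta ->
     exists sg : profile G, eps_SPE eps v0 sg /\ outcome sg v0 = theta).
Proof.
move=> PI eps_ge0 least; have [fix_lam _] := least; split.
  by move=> theta _ _ [sg [spe <-]]; apply: SPE_outcome_consistent_least eps_ge0 least spe.
move=> steady theta play_theta theta0 cons_theta.
have nego_le v : (nego lamstar v <= lamstar v + eps%:E)%E by case: (fix_lam v).
exists (spe_profile lamstar v0 theta).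
by split; [apply: spe_profile_SPE | apply: outcome_spe_profile].
Qed.
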